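(* In the setting of the two-agent SIS epidemic on a finite connected edge-transitive graph $G$ with walking rate $\lambda>0$ and recovery rate $\gamma>0$ (both agents initially infected at the same vertex), let $N$ be the total number of jumps (of both walkers combined) until the two walkers first occupy the same vertex, when started at the two endpoints of an edge. Then for every $s>0$, \[ \mathcal L_T(s)=\frac{2\gamma\left(\dfrac{1-\mathbb E\Big[\big(\tfrac{2\lambda}{2\lambda+s+\gamma}\big)^N\Big]}{s+\gamma}-\dfrac{1-\mathbb E\Big[\big(\tfrac{2\lambda}{2\lambda+s+2\gamma}\big)^N\Big]}{s+2\gamma}\right)}{\dfrac{2\lambda+s}{2\lambda}-2\,\mathbb E\Big[\big(\tfrac{2\lambda}{2\lambda+s+\gamma}\big)^N\Big]+\mathbb E\Big[\big(\tfrac{2\lambda}{2\lambda+s+2\gamma}\big)^N\Big]}, \] where $\mathcal L_T(s)=\mathbb E(e^{-sT})$.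
   Context: Model. $G=(V,E)$ is a finite, connected, undirected graph which is edge-transitive: for any two edges $e_1,e_2\in E$ there is a graph automorphism mapping $e_1$ to $e_2$. Two agents move on $V$ according to independent continuous-time simple random walks: each agent stays at its current vertex for an $\mathrm{Exp}(\lambda)$ holding time, then jumps to a uniformly chosen neighbour. Each agent has a state in $\{S,I\}$. Whenever the two agents occupy the same vertex and at least one is infected, both are infected immediately. Each infected agent independently recovers (returns to $S$) after an $\mathrm{Exp}(\gamma)$ time. Initially both agents are infected and at the same vertex. $T=\inf\{t\ge0:\text{both agents are in state } S\}$ is the end of epidemic time. By edge-transitivity the distribution of $N$ does not depend on the chosen edge; $N$ depends only on $G$. *)

From mathcomp Require Import all_boot.
From Stdlib Require Import Reals.
Set Implicit Arguments. Unset Strict Implicit. Unset Printing Implicit Defensive.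

Definition simple_graph (T : finType) (e : rel T) : Prop :=
  symmetric e /\ irreflexive e.

Definition graph_connected (T : finType) (e : rel T) : Prop :=
  forall x y : T, connect e x y.

Definition edge_transitive (T : finType) (e : rel T) : Prop :=
  forall x1 y1 x2 y2 : T, e x1 y1 -> e x2 y2 ->
    exists f : T -> T, bijective f /\ (forall a b, e (f a) (f b) = e a b) /\
      ((f x1 = x2 /\ f y1 = y2) \/ (f x1 = y2 /\ f y1 = x2)).

Definition deg (T : finType) (e : rel T) (x : T) : nat := #|[pred w | e x w]|.

Open Scope R_scope.

Definition rsum (T : finType) (P : pred T) (F : T -> R) : R :=
  \big[Rplus/0]_(w : T | P w) F w.

(* pN e n x y = P(N = n) for walkers started at x and y: each jump is made by
   walker 1 or walker 2 with probability 1/2 each (equal rates lambda), to a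
   uniform neighbour; N = number of jumps until first co-location. *)
Fixpoint pN (T : finType) (e : rel T) (n : nat) (x y : T) : R :=
  match n with
  | O => if x == y then 1 else 0
  | S m => if x == y then 0 else
      rsum [pred w | e x w] (fun w => / 2 * / INR (deg e x) * pN e m w y)
    + rsum [pred w | e y w] (fun w => / 2 * / INR (deg e y) * pN e m x w)
  end.

(* E[z^N] is the sum of the series  sum_n P(N = n) z^n. *)
Definition genN_term (T : finType) (e : rel T) (x y : T) (z : R) (n : nat) : R :=
  pN e n x y * z ^ n.

Record sstate (T : Type) := SState { pos1 : T; pos2 : T; inf1 : bool; inf2 : bool }.

Definition close (T : finType) (st : sstate T) : sstate T :=
  if (pos1 st == pos2 st) && (inf1 st || inf2 st)
  then SState (pos1 st) (pos2 st) true true else st.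

Definition absorbed (T : Type) (st : sstate T) : bool := ~~ inf1 st && ~~ inf2 st.

Definition qrate (T : Type) (lam gam : R) (st : sstate T) : R :=
  2 * lam + gam * ((if inf1 st then 1 else 0) + (if inf2 st then 1 else 0)).

(* lt_n e lam gam s n st = E[ e^{-s T} ; T is reached after exactly n
   transitions ], computed through the jump-chain / exponential-holding-time
   construction of the chain: along a path of transitions, each transition of
   rate r out of a state of total rate q contributes the factor
   (r/q) * E[e^{-s Exp(q)}] = r / (q + s). *)
Fixpoint lt_n (T : finType) (e : rel T) (lam gam s : R) (n : nat) (st : sstate T) : R :=
  match n with
  | O => if absorbed st then 1 else 0
  | S m => if absorbed st then 0 else
      let d := qrate lam gam st + s in
        rsum [pred w | e (pos1 st) w]
          (fun w => lam / INR (deg e (pos1 st)) / d *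
             lt_n e lam gam s m (close (SState w (pos2 st) (inf1 st) (inf2 st))))
      + rsum [pred w | e (pos2 st) w]
          (fun w => lam / INR (deg e (pos2 st)) / d *
             lt_n e lam gam s m (close (SState (pos1 st) w (inf1 st) (inf2 st))))
      + (if inf1 st then gam / d *
             lt_n e lam gam s m (close (SState (pos1 st) (pos2 st) false (inf2 st)))
         else 0)
      + (if inf2 st then gam / d *
             lt_n e lam gam s m (close (SState (pos1 st) (pos2 st) (inf1 st) false))
         else 0)
  end.

Definition init_state (T : Type) (v0 : T) : sstate T := SState v0 v0 true true.

From Pilot Require Import Defs.
From HB Require Import structures.
From mathcomp Require Import all_boot.
From Stdlib Require Import Reals Lra.
From Coquelicot Require Import Coquelicot.

Set Implicit Arguments.
Unset Strict Implicit.
Unset Printing Implicit Defensive.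
Open Scope R_scope.

(* As a function of the state of the chain, E[e^{-sT}] is the unique bounded
   solution of the first-step equations, the first-step operator being a
   contraction of ratio (2λ+2γ)/(2λ+2γ+s).  While the agents walk apart with
   k of them infected, a walker jump that beats every recovery carries the
   Laplace factor 2λ/(2λ+s+kγ) = z_k, so the N jumps up to the meeting carry
   z_k^N; hence the solution is affine in g_k(x,y) = E_{x,y}[z_k^N].  Its
   coefficients involve L = E[e^{-sT}] itself, because a meeting with an
   infected agent brings the epidemic back to its initial state.  From that
   state both walkers step onto an edge, where g_k takes a single value by
   edge-transitivity, and the first-step equation there determines L as the
   stated ratio. *)

HB.instance Definition _ := Monoid.isComLaw.Build R 0 Rplus
  (fun x y z => esym (Rplus_assoc x y z)) Rplus_comm Rplus_0_l.

Section RealSums.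
Variable T : finType.
Implicit Types (P : pred T) (F G : T -> R).

Lemma rsumD P F G : rsum P (fun w => F w + G w) = rsum P F + rsum P G.
Proof. exact: big_split. Qed.

Lemma rsumZ P k F : rsum P (fun w => k * F w) = k * rsum P F.
Proof. by rewrite /rsum (big_morph _ (Rmult_plus_distr_l k) (Rmult_0_r k)). Qed.

Lemma rsum_le P F G : (forall w, P w -> F w <= G w) -> rsum P F <= rsum P G.
Proof. by apply: big_ind2 => [|a b c d]; [lra | apply: Rplus_le_compat]. Qed.

Lemma rsum_ge0 P F : (forall w, P w -> 0 <= F w) -> 0 <= rsum P F.
Proof. by apply: big_ind => [|a b]; [lra | apply: Rplus_le_le_0_compat]. Qed.

Lemma rsum_const P k : rsum P (fun=> k) = INR #|P| * k.
Proof.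
have INR_morph m n : INR (m + n) * k = INR m * k + INR n * k.
  by rewrite plus_INR Rmult_plus_distr_r.
rewrite -sum1_card (big_morph (fun n => INR n * k) INR_morph (Rmult_0_l k : INR 0 * k = 0)).
by apply: eq_bigr => w _ /=; rewrite Rmult_1_l.
Qed.

Lemma is_lim_seq_rsum P (u : T -> nat -> R) (l : T -> R) :
  (forall w, P w -> is_lim_seq (u w) (l w)) ->
  is_lim_seq (fun n => rsum P (fun w => u w n)) (rsum P l).
Proof.
move=> lim_u; rewrite /rsum; elim: (index_enum T) => [|w r IH].
  rewrite big_nil; apply: (is_lim_seq_ext (fun=> 0)); last exact: is_lim_seq_const.
  by move=> n; rewrite big_nil.
rewrite big_cons; case Pw: (P w).
  apply: (is_lim_seq_ext (fun n => u w n + \big[Rplus/0]_(j <- r | P j) u j n)).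
    by move=> n; rewrite big_cons Pw.
  by apply: is_lim_seq_plus'; [exact: lim_u | exact: IH].
apply: (is_lim_seq_ext (fun n => \big[Rplus/0]_(j <- r | P j) u j n)) => // n.
by rewrite big_cons Pw.
Qed.

End RealSums.

Lemma Rinv_INR_ge0 (k : nat) : 0 <= / INR k.
Proof.
case: k => [|k]; first by rewrite /= Rinv_0; lra.
by apply/Rlt_le/Rinv_0_lt_compat/lt_0_INR/ltP.
Qed.

Lemma INR_mul_inv_le1 (k : nat) : INR k * / INR k <= 1.
Proof.
case: k => [|k]; first by rewrite /= Rmult_0_l; lra.
by rewrite Rinv_r; [lra | apply: not_0_INR].
Qed.

Lemma div_in01 a b : 0 < a <= b -> 0 < a / b <= 1.
Proof.
move=> ab; split; first by apply: Rdiv_lt_0_compat; lra.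
by apply: (proj1 (Rdiv_le_1 a b ltac:(lra))); lra.
Qed.

Lemma div_add_le a b c : 0 < a <= b -> 0 < c -> a / (a + c) <= b / (b + c).
Proof.
move=> ab c_gt0.
have -> : a / (a + c) = 1 - c / (a + c) by field; lra.
have -> : b / (b + c) = 1 - c / (b + c) by field; lra.
suff : c / (b + c) <= c / (a + c) by lra.
by apply: Rmult_le_compat_l; [lra | apply: Rinv_le_contravar; lra].
Qed.

Lemma two_pow_sub_le1 a b n : 0 <= a -> a * a <= b -> 2 * a ^ n - b ^ n <= 1.
Proof.
move=> a_ge0 ab; have := pow_incr (a * a) b n (conj (Rmult_le_pos _ _ a_ge0 a_ge0) ab).
by rewrite Rpow_mult_distr; have := Rle_0_sqr (a ^ n - 1); rewrite /Rsqr; nra.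
Qed.

Lemma Rabs_affine_le a b c g1 g2 : 0 <= g1 <= 1 -> 0 <= g2 <= 1 ->
  Rabs (a + b * g1 + c * g2) <= Rabs a + Rabs b + Rabs c.
Proof.
move=> g1_01 g2_01.
have scale_le k g : 0 <= g <= 1 -> Rabs (k * g) <= Rabs k.
  by move=> g01; rewrite Rabs_mult (Rabs_pos_eq g); have := Rabs_pos k; nra.
have := scale_le b g1 g1_01; have := scale_le c g2 g2_01.
have := Rabs_triang (a + b * g1) (c * g2); have := Rabs_triang a (b * g1); lra.
Qed.

Lemma Un_cv_geometric_error (u : nat -> R) l M q :
  0 <= q < 1 -> (forall n, Rabs (l - u n) <= M * q ^ n) -> Un_cv u l.
Proof.
move=> q01 err; apply/is_lim_seq_Reals.
have lim_err : is_lim_seq (fun n => M * q ^ n) 0.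
  have := is_lim_seq_scal_l _ M _ (is_lim_seq_geom q ltac:(rewrite Rabs_pos_eq; lra)).
  by rewrite /= Rmult_0_r.
apply: (is_lim_seq_le_le (fun n => l - M * q ^ n) _ (fun n => l + M * q ^ n)).
- move=> n; have := Rle_abs (l - u n); have := Rle_abs (- (l - u n)).
  by rewrite Rabs_Ropp; have := err n; lra.
- have := is_lim_seq_minus' _ _ _ _ (is_lim_seq_const l) lim_err.
  by rewrite Rminus_0_r.
- have := is_lim_seq_plus' _ _ _ _ (is_lim_seq_const l) lim_err.
  by rewrite Rplus_0_r.
Qed.

Section NeighbourAverage.
Variables (T : finType) (e : rel T).
Implicit Types (x w : T) (F G : T -> R).

Definition nbr_avg x F : R := rsum [pred w | e x w] (fun w => / INR (deg e x) * F w).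

Lemma eq_nbr_avg x F G : (forall w, e x w -> F w = G w) -> nbr_avg x F = nbr_avg x G.
Proof. by move=> eq_FG; apply: eq_bigr => w xw; rewrite eq_FG. Qed.

Lemma nbr_avgD x F G : nbr_avg x (fun w => F w + G w) = nbr_avg x F + nbr_avg x G.
Proof. by rewrite /nbr_avg -rsumD; apply: eq_bigr => w _; ring. Qed.

Lemma nbr_avgB x F G : nbr_avg x (fun w => F w - G w) = nbr_avg x F - nbr_avg x G.
Proof.
have -> : nbr_avg x F - nbr_avg x G = nbr_avg x F + -1 * nbr_avg x G by ring.
by rewrite /nbr_avg -rsumZ -rsumD; apply: eq_bigr => w _; ring.
Qed.

Lemma nbr_avgZr x F k : nbr_avg x (fun w => F w * k) = nbr_avg x F * k.
Proof. by rewrite Rmult_comm /nbr_avg -rsumZ; apply: eq_bigr => w _; ring. Qed.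

Lemma nbr_avg_sum x (F : nat -> T -> R) N :
  nbr_avg x (fun w => sum_f_R0 (F^~ w) N) = sum_f_R0 (fun n => nbr_avg x (F n)) N.
Proof. by elim: N => [|N IH] //=; rewrite nbr_avgD IH. Qed.

Lemma nbr_avg_ge0 x F : (forall w, e x w -> 0 <= F w) -> 0 <= nbr_avg x F.
Proof.
move=> F_ge0; apply: rsum_ge0 => w xw.
by apply: Rmult_le_pos; [exact: Rinv_INR_ge0 | exact: F_ge0].
Qed.

Lemma nbr_avg_le x F B : 0 <= B -> (forall w, e x w -> F w <= B) -> nbr_avg x F <= B.
Proof.
move=> B_ge0 F_le; apply: Rle_trans (rsum_le (G := fun=> / INR (deg e x) * B) _) _.
  by move=> w xw; apply: Rmult_le_compat_l; [exact: Rinv_INR_ge0 | exact: F_le].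
rewrite rsum_const -Rmult_assoc -[X in _ <= X]Rmult_1_l.
by apply: Rmult_le_compat_r => //; exact: INR_mul_inv_le1.
Qed.

Lemma Rabs_nbr_avg_le x F B : 0 <= B -> (forall w, e x w -> Rabs (F w) <= B) ->
  Rabs (nbr_avg x F) <= B.
Proof.
move=> B_ge0 F_le; apply: Rabs_le; split; last first.
  by apply: nbr_avg_le => // w xw; have := Rle_abs (F w); have := F_le w xw; lra.
have avg0 : nbr_avg x (fun=> 0) = 0 by rewrite /nbr_avg rsum_const !Rmult_0_r.
have : nbr_avg x (fun w => 0 - F w) <= B.
  apply: nbr_avg_le => // w xw.
  by have := Rle_abs (- F w); rewrite Rabs_Ropp; have := F_le w xw; lra.
by rewrite nbr_avgB avg0; lra.
Qed.

Lemma is_lim_seq_nbr_avg x (u : T -> nat -> R) (l : T -> R) :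
  (forall w, e x w -> is_lim_seq (u w) (l w)) ->
  is_lim_seq (fun n => nbr_avg x (fun w => u w n)) (nbr_avg x l).
Proof.
move=> lim_u; apply: is_lim_seq_rsum => w xw.
by apply: (is_lim_seq_scal_l _ _ (Finite _)); exact: lim_u.
Qed.

Lemma nbr_avg_const x k : (0 < deg e x)%nat -> nbr_avg x (fun=> k) = k.
Proof.
move=> deg_gt0; rewrite /nbr_avg rsum_const -Rmult_assoc Rinv_r ?Rmult_1_l //.
by apply: not_0_INR; apply/eqP; rewrite -lt0n.
Qed.

Lemma nbr_avg_affine x a b c F G : (0 < deg e x)%nat ->
  nbr_avg x (fun w => a + b * F w + c * G w) = a + b * nbr_avg x F + c * nbr_avg x G.
Proof.
move=> deg_gt0; rewrite -{2}(nbr_avg_const a deg_gt0) /nbr_avg -!rsumZ -!rsumD.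
by apply: eq_bigr => w _; ring.
Qed.

End NeighbourAverage.

Lemma connected_deg_gt0 (T : finType) (e : rel T) (u v x : T) :
  graph_connected e -> e u v -> (0 < deg e x)%nat.
Proof.
move=> e_conn e_uv; apply/card_gt0P.
have [->|neq_xu] := eqVneq x u; first by exists v.
case/connectP: (e_conn x u) => -[/= _ eq_ux|w p /= /andP[xw _] _]; last by exists w.
by rewrite eq_ux eqxx in neq_xu.
Qed.

Section MeetingCount.
Variables (T : finType) (e : rel T).

Lemma pN_succ n x y : pN e n.+1 x y =
  if x == y then 0
  else / 2 * nbr_avg e x (fun w => pN e n w y) + / 2 * nbr_avg e y (pN e n x).
Proof.
rewrite /= /nbr_avg -!rsumZ; case: (x == y) => //.
by congr (_ + _); apply: eq_bigr => w _; ring.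
Qed.

Lemma pN_ge0 n x y : 0 <= pN e n x y.
Proof.
elim: n x y => [|n IH] x y; first by rewrite /=; case: (x == y); lra.
rewrite pN_succ; case: (x == y); first lra.
have avg_ge0 a F : (forall w, 0 <= F w) -> 0 <= / 2 * nbr_avg e a F.
  by move=> F_ge0; apply: Rmult_le_pos; [lra | apply: nbr_avg_ge0 => w _; exact: F_ge0].
by apply: Rplus_le_le_0_compat; apply: avg_ge0 => w; exact: IH.
Qed.

Lemma pN_sym n x y : pN e n x y = pN e n y x.
Proof.
elim: n x y => [|n IH] x y; first by rewrite /= eq_sym.
rewrite !pN_succ eq_sym; case: (y == x) => //; rewrite Rplus_comm.
by congr (_ * _ + _ * _); apply: eq_nbr_avg => w _; exact: IH.
Qed.

Lemma genN_term_ge0 z x y n : 0 <= z -> 0 <= genN_term e x y z n.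
Proof. by move=> z_ge0; apply: Rmult_le_pos; [exact: pN_ge0 | exact: pow_le]. Qed.

Lemma sum_genN_term_diag z x N : sum_f_R0 (genN_term e x x z) N = 1.
Proof.
elim: N => [|N IH]; first by rewrite /genN_term /= eqxx; ring.
by rewrite /= IH /genN_term pN_succ eqxx; ring.
Qed.

Lemma sum_genN_term_succ z x y N : x != y ->
  sum_f_R0 (genN_term e x y z) N.+1 =
  z / 2 * (nbr_avg e x (fun w => sum_f_R0 (genN_term e w y z) N)
         + nbr_avg e y (fun w => sum_f_R0 (genN_term e x w z) N)).
Proof.
move=> neq_xy; rewrite decomp_sum /=; last exact/ltP.
have -> : genN_term e x y z 0 = 0 by rewrite /genN_term /= (negbTE neq_xy) Rmult_0_l.
rewrite Rplus_0_l (nbr_avg_sum e x (fun n w => genN_term e w y z n)).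
rewrite (nbr_avg_sum e y (fun n w => genN_term e x w z n)) -plus_sum scal_sum.
apply: sum_eq => n _.
by rewrite /genN_term pN_succ (negbTE neq_xy) !nbr_avgZr -tech_pow_Rmult; field.
Qed.

Lemma sum_genN_term_ge0 z x y N : 0 <= z -> 0 <= sum_f_R0 (genN_term e x y z) N.
Proof. by move=> z_ge0; apply: cond_pos_sum => n; exact: genN_term_ge0. Qed.

Lemma sum_genN_term_le1 z x y N : 0 <= z <= 1 -> sum_f_R0 (genN_term e x y z) N <= 1.
Proof.
move=> z01; elim: N x y => [|N IH] x y; first by rewrite /genN_term /=; case: (x == y); lra.
have [->|neq_xy] := eqVneq x y; first by rewrite sum_genN_term_diag; lra.
rewrite sum_genN_term_succ //.
have := nbr_avg_le Rle_0_1 (fun w (_ : e x w) => IH w y).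
have := nbr_avg_le Rle_0_1 (fun w (_ : e y w) => IH x w).
nra.
Qed.

Definition genN z x y : R := real (Lim_seq (sum_f_R0 (genN_term e x y z))).

Lemma genN_correct z x y : 0 <= z <= 1 ->
  is_lim_seq (sum_f_R0 (genN_term e x y z)) (genN z x y).
Proof.
move=> z01; apply: Lim_seq_correct'; apply: (ex_finite_lim_seq_incr _ 1) => N.
  by have := genN_term_ge0 x y N.+1 (proj1 z01); rewrite /=; lra.
exact: sum_genN_term_le1.
Qed.

Lemma genN_bounds z x y : 0 <= z <= 1 -> 0 <= genN z x y <= 1.
Proof.
move=> z01; have lim := genN_correct (x := x) (y := y) z01; split.
  apply: (is_lim_seq_le (fun=> 0) _ 0 _ _ (is_lim_seq_const 0) lim) => N.
  by apply: sum_genN_term_ge0; lra.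
apply: (is_lim_seq_le _ (fun=> 1) _ 1 _ lim (is_lim_seq_const 1)) => N.
exact: sum_genN_term_le1.
Qed.

Lemma genN_diag z x : genN z x x = 1.
Proof.
rewrite /genN (Lim_seq_ext _ (fun=> 1)) ?Lim_seq_const // => N.
exact: sum_genN_term_diag.
Qed.

Lemma genN_rec z x y : 0 <= z <= 1 -> x != y ->
  genN z x y = z / 2 * (nbr_avg e x (fun w => genN z w y) + nbr_avg e y (genN z x)).
Proof.
move=> z01 neq_xy.
have lim_succ := proj1 (is_lim_seq_incr_1 _ _) (genN_correct (x := x) (y := y) z01).
have lim_rec : is_lim_seq (fun N => sum_f_R0 (genN_term e x y z) N.+1)
    (z / 2 * (nbr_avg e x (fun w => genN z w y) + nbr_avg e y (genN z x))).
  apply: (is_lim_seq_ext _ _ _ (fun N => esym (sum_genN_term_succ z N neq_xy))).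
  apply: (is_lim_seq_scal_l _ _ (Finite _)); apply: is_lim_seq_plus';
    apply: is_lim_seq_nbr_avg => w _; exact: genN_correct.
have := is_lim_seq_unique _ _ lim_succ.
by rewrite (is_lim_seq_unique _ _ lim_rec); case.
Qed.

Lemma genN_sym z x y : genN z x y = genN z y x.
Proof.
rewrite /genN (Lim_seq_ext _ (sum_f_R0 (genN_term e y x z))) // => N.
by apply: sum_eq => n _; rewrite /genN_term pN_sym.
Qed.

Lemma twice_genN_sub_le1 z1 z2 x y : 0 <= z1 <= 1 -> 0 <= z2 <= 1 ->
  (forall n, 2 * z1 ^ n - z2 ^ n <= 1) -> 2 * genN z1 x y - genN z2 x y <= 1.
Proof.
move=> z1_01 z2_01 pow_le1.
have lim1 := genN_correct (x := x) (y := y) z1_01.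
have lim := is_lim_seq_minus' _ _ _ _ (is_lim_seq_scal_l _ 2 (Finite _) lim1)
  (genN_correct (x := x) (y := y) z2_01).
apply: (is_lim_seq_le _ (fun=> 1) _ 1 _ lim (is_lim_seq_const 1)) => N.
rewrite scal_sum -minus_sum; apply: Rle_trans (sum_genN_term_le1 x y N (z := 1) ltac:(lra)).
apply: sum_Rle => n _; rewrite /genN_term pow1.
by have := pN_ge0 n x y; have := pow_le1 n; nra.
Qed.

Lemma nbr_avg_genN_affine z1 z2 a b c x y :
  (0 < deg e x)%nat -> (0 < deg e y)%nat -> 0 < z1 <= 1 -> 0 < z2 <= 1 -> x != y ->
  nbr_avg e x (fun w => a + b * genN z1 w y + c * genN z2 w y)
  + nbr_avg e y (fun w => a + b * genN z1 x w + c * genN z2 x w)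
  = 2 * a + 2 / z1 * b * genN z1 x y + 2 / z2 * c * genN z2 x y.
Proof.
move=> deg_x deg_y z1_01 z2_01 neq_xy.
have z1_01' : 0 <= z1 <= 1 by lra.
have z2_01' : 0 <= z2 <= 1 by lra.
rewrite !nbr_avg_affine // (genN_rec z1_01' neq_xy) (genN_rec z2_01' neq_xy).
by field; lra.
Qed.

End MeetingCount.

Section Automorphism.
Variables (T : finType) (e : rel T) (f : T -> T).
Hypotheses (f_bij : bijective f) (f_mono : {mono f : a b / e a b}).

Lemma deg_auto x : deg e (f x) = deg e x.
Proof.
rewrite /deg -!sum1_card (reindex f) /=; last exact: onW_bij.
by apply: eq_bigl => w; rewrite !inE f_mono.
Qed.

Lemma nbr_avg_auto x F : nbr_avg e (f x) F = nbr_avg e x (fun w => F (f w)).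
Proof.
rewrite /nbr_avg /rsum deg_auto (reindex f) /=; last exact: onW_bij.
by apply: eq_bigl => w; rewrite f_mono.
Qed.

Lemma pN_auto n x y : pN e n (f x) (f y) = pN e n x y.
Proof.
have f_inj := bij_inj f_bij.
elim: n x y => [|n IH] x y; first by rewrite /= (inj_eq f_inj).
rewrite !pN_succ (inj_eq f_inj) !nbr_avg_auto; case: (x == y) => //.
by congr (_ * _ + _ * _); apply: eq_nbr_avg => w _; exact: IH.
Qed.

Lemma genN_auto z x y : genN e z (f x) (f y) = genN e z x y.
Proof.
rewrite /genN (Lim_seq_ext _ (sum_f_R0 (genN_term e x y z))) // => N.
by apply: sum_eq => n _; rewrite /genN_term pN_auto.
Qed.

End Automorphism.

Lemma close_idem (T : finType) (st : sstate T) : Defs.close (Defs.close st) = Defs.close st.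
Proof.
case: st => x y i1 i2; rewrite {2 3}/Defs.close /=.
by case: ifP => [/andP[/eqP-> _]|not_met]; rewrite /Defs.close /= ?eqxx ?not_met.
Qed.

Section FirstStep.
Variables (T : finType) (e : rel T) (lam gam s : R).

Definition first_step (f : sstate T -> R) (st : sstate T) : R :=
  let: SState x y i1 i2 := st in
  let d := qrate lam gam st + s in
  lam / d * (nbr_avg e x (fun w => f (SState w y i1 i2))
             + nbr_avg e y (fun w => f (SState x w i1 i2)))
  + (if i1 then gam / d * f (SState x y false i2) else 0)
  + (if i2 then gam / d * f (SState x y i1 false) else 0).

Lemma lt_n_succ n st : lt_n e lam gam s n.+1 st =
  if absorbed st then 0 else first_step (fun st' => lt_n e lam gam s n (Defs.close st')) st.
Proof.
have walk x d F : rsum [pred w | e x w] (fun w => lam / INR (deg e x) / d * F w)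
                  = lam / d * nbr_avg e x F.
  by rewrite /nbr_avg -rsumZ; apply: eq_bigr => w _; rewrite /Rdiv; ring.
by case: st => x y i1 i2; rewrite /= !walk Rmult_plus_distr_l.
Qed.

Lemma first_stepD f g st :
  first_step (fun st' => f st' + g st') st = first_step f st + first_step g st.
Proof. by case: st => x y [] [] /=; rewrite !nbr_avgD /Rdiv; ring. Qed.

Lemma first_stepB f g st :
  first_step (fun st' => f st' - g st') st = first_step f st - first_step g st.
Proof. by case: st => x y [] [] /=; rewrite !nbr_avgB /Rdiv; ring. Qed.

Lemma first_step_sum (F : nat -> sstate T -> R) N st :
  first_step (fun st' => sum_f_R0 (F^~ st') N) st = sum_f_R0 (fun n => first_step (F n) st) N.
Proof. by elim: N => [|N IH] //=; rewrite first_stepD IH. Qed.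

Lemma sum_lt_n_absorbed N st : absorbed st ->
  sum_f_R0 (fun n => lt_n e lam gam s n st) N = 1.
Proof.
move=> abs; elim: N => [|N IH]; first by rewrite /= abs.
by rewrite tech5 IH lt_n_succ abs Rplus_0_r.
Qed.

Lemma sum_lt_n_succ N st : ~~ absorbed st ->
  sum_f_R0 (fun n => lt_n e lam gam s n st) N.+1 =
  first_step (fun st' => sum_f_R0 (fun n => lt_n e lam gam s n (Defs.close st')) N) st.
Proof.
move=> not_abs; rewrite decomp_sum; last exact/ltP.
have -> : lt_n e lam gam s 0 st = 0 by rewrite /= (negbTE not_abs).
rewrite Rplus_0_l first_step_sum; apply: sum_eq => n _.
by rewrite lt_n_succ (negbTE not_abs).
Qed.

Hypotheses (lam_gt0 : 0 < lam) (gam_gt0 : 0 < gam) (s_gt0 : 0 < s).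

Let rho := (2 * lam + 2 * gam) / (2 * lam + 2 * gam + s).

Lemma rho_in01 : 0 <= rho < 1.
Proof.
split; first by apply: Rlt_le; apply: Rdiv_lt_0_compat; lra.
have den_gt0 : 0 < 2 * lam + 2 * gam + s by lra.
by apply: (proj1 (Rdiv_lt_1 _ _ den_gt0)); lra.
Qed.

Lemma Rabs_first_step_le f B st : (forall st', Rabs (f st') <= B) ->
  Rabs (first_step f st) <= rho * B.
Proof.
move=> f_le; have B_ge0 : 0 <= B by apply: Rle_trans (f_le st); exact: Rabs_pos.
case: st => x y i1 i2.
have q_def : qrate lam gam (SState x y i1 i2)
             = 2 * lam + (if i1 then gam else 0) + (if i2 then gam else 0).
  by rewrite /qrate; case: i1; case: i2 => /=; ring.
have q_bounds : 2 * lam <= qrate lam gam (SState x y i1 i2) <= 2 * lam + 2 * gam.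
  by rewrite q_def; case: i1 {q_def}; case: i2; lra.
rewrite /first_step; set q := qrate lam gam _ in q_def q_bounds *.
have k_ge0 k : 0 < k -> 0 <= k / (q + s) by move=> k_gt0; apply/Rlt_le/Rdiv_lt_0_compat; lra.
have recover_le (i : bool) st' : Rabs (if i then gam / (q + s) * f st' else 0)
                                 <= (if i then gam else 0) / (q + s) * B.
  case: i; last by rewrite Rabs_R0 /Rdiv !Rmult_0_l; lra.
  rewrite Rabs_mult Rabs_pos_eq; last exact: k_ge0.
  by apply: Rmult_le_compat_l; [exact: k_ge0 | exact: f_le].
set W := lam / (q + s) * _; set R1 := (if i1 then _ else _); set R2 := (if i2 then _ else _).
have W_le : Rabs W <= lam / (q + s) * (2 * B).
  rewrite /W Rabs_mult Rabs_pos_eq; last exact: k_ge0.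
  apply: Rmult_le_compat_l; first exact: k_ge0.
  apply: Rle_trans (Rabs_triang _ _) _.
  by rewrite double; apply: Rplus_le_compat; apply: Rabs_nbr_avg_le.
have R1_le : Rabs R1 <= (if i1 then gam else 0) / (q + s) * B := recover_le i1 _.
have R2_le : Rabs R2 <= (if i2 then gam else 0) / (q + s) * B := recover_le i2 _.
apply: (Rle_trans _ (q / (q + s) * B)).
  have -> : q / (q + s) * B = lam / (q + s) * (2 * B)
      + (if i1 then gam else 0) / (q + s) * B + (if i2 then gam else 0) / (q + s) * B.
    by rewrite {1}q_def; field; lra.
  by have := Rabs_triang (W + R1) R2; have := Rabs_triang W R1; lra.
by apply: Rmult_le_compat_r => //; apply: div_add_le; lra.
Qed.

Section BoundedSolution.
Variables (phi : sstate T -> R) (K : R).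
Hypotheses (phi_bounded : forall st, Rabs (phi st) <= K)
  (phi_absorbed : forall st, absorbed st -> phi st = 1)
  (phi_close : forall st, phi (Defs.close st) = phi st)
  (phi_first_step : forall st, Defs.close st = st -> ~~ absorbed st -> phi st = first_step phi st).

Lemma sum_lt_n_error N st : Defs.close st = st ->
  Rabs (phi st - sum_f_R0 (fun n => lt_n e lam gam s n st) N) <= (K + 1) * rho ^ N.
Proof.
have [rho_ge0 _] := rho_in01.
have K_ge0 : 0 <= K by apply: Rle_trans (phi_bounded st); exact: Rabs_pos.
elim: N st => [|N IH] st closed.
  have lt0_le1 : Rabs (lt_n e lam gam s 0 st) <= 1.
    by rewrite /=; case: (absorbed st); rewrite ?Rabs_R0 ?Rabs_R1; lra.
  rewrite pow_O Rmult_1_r; change (sum_f_R0 _ 0) with (lt_n e lam gam s 0 st).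
  have := Rabs_triang (phi st) (- lt_n e lam gam s 0 st); rewrite Rabs_Ropp.
  by have := phi_bounded st; rewrite /Rminus; lra.
case/boolP: (absorbed st) => [abs|not_abs].
  rewrite sum_lt_n_absorbed // phi_absorbed // Rminus_diag_eq // Rabs_R0.
  by apply: Rmult_le_pos; [lra | exact: pow_le].
rewrite sum_lt_n_succ // {1}(phi_first_step closed not_abs) -first_stepB /=.
rewrite -Rmult_assoc (Rmult_comm _ rho) Rmult_assoc.
apply: Rabs_first_step_le => st'; rewrite -phi_close.
by apply: IH; exact: close_idem.
Qed.

Theorem lt_n_series_fixpoint st : Defs.close st = st ->
  infinite_sum (fun n => lt_n e lam gam s n st) (phi st).
Proof.
move=> closed; apply: (Un_cv_geometric_error (M := K + 1) rho_in01).
by move=> n; exact: sum_lt_n_error.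
Qed.

End BoundedSolution.

End FirstStep.

Section Epidemic.
Variables (T : finType) (e : rel T) (lam gam s : R) (u v : T).
Hypotheses (e_conn : graph_connected e) (e_trans : edge_transitive e) (e_uv : e u v).
Hypotheses (lam_gt0 : 0 < lam) (gam_gt0 : 0 < gam) (s_gt0 : 0 < s).

Let z1 := 2 * lam / (2 * lam + s + gam).
Let z2 := 2 * lam / (2 * lam + s + 2 * gam).

Lemma z1_in01 : 0 < z1 <= 1.
Proof. by apply: div_in01; lra. Qed.

Lemma z2_in01 : 0 < z2 <= 1.
Proof. by apply: div_in01; lra. Qed.

Lemma z1_sqr_le_z2 : z1 * z1 <= z2.
Proof.
rewrite /z1 /z2; set a := 2 * lam + s + gam; set b := 2 * lam + s + 2 * gam.
have a_gt0 : 0 < a by rewrite /a; lra.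
have b_gt0 : 0 < b by rewrite /b; lra.
have -> : 2 * lam / a * (2 * lam / a) = 2 * lam * b / (a * a) * (2 * lam / b) by field; lra.
rewrite -[X in _ <= X]Rmult_1_l; apply: Rmult_le_compat_r.
  by apply/Rlt_le/Rdiv_lt_0_compat; lra.
have aa_gt0 : 0 < a * a by nra.
by apply: (proj1 (Rdiv_le_1 _ _ aa_gt0)); rewrite /a /b; nra.
Qed.

Lemma deg_gt0 x : (0 < deg e x)%nat.
Proof. exact: connected_deg_gt0 e_conn e_uv. Qed.

Lemma genN_edge z a b : e a b -> genN e z a b = genN e z u v.
Proof.
move=> e_ab; have [f [f_bij [f_mono [[fa fb]|[fa fb]]]]] := e_trans e_ab e_uv.
  by rewrite -(genN_auto f_bij f_mono) fa fb.
by rewrite -(genN_auto f_bij f_mono) fa fb genN_sym.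
Qed.

Definition LT : R :=
  2 * gam * ((1 - genN e z1 u v) / (s + gam) - (1 - genN e z2 u v) / (s + 2 * gam))
  / ((2 * lam + s) / (2 * lam) - 2 * genN e z1 u v + genN e z2 u v).

Lemma LT_den_gt0 : 0 < (2 * lam + s) / (2 * lam) - 2 * genN e z1 u v + genN e z2 u v.
Proof.
have [z1_gt0 z1_le1] := z1_in01; have [z2_gt0 z2_le1] := z2_in01.
have := @twice_genN_sub_le1 _ e z1 z2 u v (conj (Rlt_le _ _ z1_gt0) z1_le1)
  (conj (Rlt_le _ _ z2_gt0) z2_le1) (fun n => two_pow_sub_le1 n (Rlt_le _ _ z1_gt0) z1_sqr_le_z2).
have : 0 < s / (2 * lam) by apply: Rdiv_lt_0_compat; lra.
have -> : (2 * lam + s) / (2 * lam) = 1 + s / (2 * lam) by field; lra.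
lra.
Qed.

Lemma LT_mul_den : LT * ((2 * lam + s) / (2 * lam) - 2 * genN e z1 u v + genN e z2 u v)
  = 2 * gam * ((1 - genN e z1 u v) / (s + gam) - (1 - genN e z2 u v) / (s + 2 * gam)).
Proof.
move: LT_den_gt0; rewrite /LT; set D := (_ - _ + _) => D_gt0.
by field; lra.
Qed.

(* [phi st] is E[e^{-sT}] from [st]. *)
Definition phiA (i1 i2 : bool) : R :=
  match i1, i2 with
  | true, true => 2 * gam / (s + gam) - 2 * gam / (s + 2 * gam)
  | false, false => 1
  | _, _ => gam / (s + gam)
  end.

Definition phiB (i1 i2 : bool) : R :=
  match i1, i2 with
  | true, true => 2 * LT - 2 * gam / (s + gam)
  | false, false => 0
  | _, _ => LT - gam / (s + gam)
  end.

Definition phiC (i1 i2 : bool) : R :=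
  match i1, i2 with
  | true, true => 2 * gam / (s + 2 * gam) - LT
  | _, _ => 0
  end.

Definition phi (st : sstate T) : R :=
  let: SState x y i1 i2 := st in
  phiA i1 i2 + phiB i1 i2 * genN e z1 x y + phiC i1 i2 * genN e z2 x y.

Lemma phi_meet x i1 i2 : i1 || i2 -> phi (SState x x i1 i2) = LT.
Proof. by rewrite /= !genN_diag; case: i1; case: i2 => //= _; field; lra. Qed.

Lemma phi_close st : phi (Defs.close st) = phi st.
Proof.
case: st => x y i1 i2; rewrite /Defs.close.
case: ifP => // /andP[/eqP eq_xy infected]; rewrite /= in eq_xy infected.
by rewrite -eq_xy !phi_meet.
Qed.

Lemma phi_absorbed st : absorbed st -> phi st = 1.
Proof. by case: st => x y [] [] //= _; ring. Qed.

Let coef_norm (i1 i2 : bool) : R :=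
  Rabs (phiA i1 i2) + Rabs (phiB i1 i2) + Rabs (phiC i1 i2).

Let phi_bound : R :=
  coef_norm true true + coef_norm true false + coef_norm false true + coef_norm false false.

Lemma Rabs_phi_le st : Rabs (phi st) <= phi_bound.
Proof.
case: st => x y i1 i2.
have norm_ge0 j1 j2 : 0 <= coef_norm j1 j2.
  rewrite /coef_norm; have := Rabs_pos (phiA j1 j2).
  by have := Rabs_pos (phiB j1 j2); have := Rabs_pos (phiC j1 j2); lra.
apply: Rle_trans (_ : _ <= coef_norm i1 i2) _.
  by apply: Rabs_affine_le; apply: genN_bounds; [have := z1_in01 | have := z2_in01]; lra.
have := norm_ge0 true true; have := norm_ge0 true false.
have := norm_ge0 false true; have := norm_ge0 false false.
by rewrite /phi_bound; case: i1; case: i2; lra.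
Qed.

Lemma phi_first_step_apart x y i1 i2 : x != y -> i1 || i2 ->
  phi (SState x y i1 i2) = first_step e lam gam s phi (SState x y i1 i2).
Proof.
move=> neq_xy infected; rewrite /first_step /=.
rewrite (nbr_avg_genN_affine _ _ _ (deg_gt0 x) (deg_gt0 y) z1_in01 z2_in01 neq_xy).
by rewrite /z1 /z2 /qrate; case: i1 i2 infected => [] [] //= _; field; lra.
Qed.

Lemma phi_first_step_meet x :
  phi (SState x x true true) = first_step e lam gam s phi (SState x x true true).
Proof.
have avg_edge F : (forall w, e x w -> F w = phi (SState u v true true)) ->
    nbr_avg e x F = phi (SState u v true true).
  by move=> F_edge; rewrite (eq_nbr_avg F_edge) nbr_avg_const // deg_gt0.
have avg1 : nbr_avg e x (fun w => phi (SState w x true true)) = phi (SState u v true true).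
  apply: avg_edge => w xw.
  by rewrite /= (genN_sym e z1 w) (genN_sym e z2 w) (genN_edge z1 xw) (genN_edge z2 xw).
have avg2 : nbr_avg e x (fun w => phi (SState x w true true)) = phi (SState u v true true).
  by apply: avg_edge => w xw; rewrite /= (genN_edge z1 xw) (genN_edge z2 xw).
rewrite {1}phi_meet // /first_step; cbv beta iota zeta.
rewrite avg1 avg2 !phi_meet // /qrate /=.
apply: (@eq_trans _ _ (LT + 2 * lam / (2 * lam + 2 * gam + s) *
   (2 * gam * ((1 - genN e z1 u v) / (s + gam) - (1 - genN e z2 u v) / (s + 2 * gam))
    - LT * ((2 * lam + s) / (2 * lam) - 2 * genN e z1 u v + genN e z2 u v)))).
  by rewrite LT_mul_den Rminus_diag_eq // Rmult_0_r Rplus_0_r.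
by field; lra.
Qed.

Lemma phi_first_step st : Defs.close st = st -> ~~ absorbed st ->
  phi st = first_step e lam gam s phi st.
Proof.
case: st => x y i1 i2 closed; rewrite /absorbed /= negb_and !negbK => infected.
have [eq_xy|neq_xy] := eqVneq x y; last exact: phi_first_step_apart.
move: closed; rewrite -eq_xy /Defs.close /= eqxx infected /=.
by case=> <- <-; exact: phi_first_step_meet.
Qed.

Theorem LT_series v0 : infinite_sum (fun n => lt_n e lam gam s n (init_state v0)) LT.
Proof.
rewrite -(phi_meet v0 (i1 := true) (i2 := true)) //.
apply: (lt_n_series_fixpoint lam_gt0 gam_gt0 s_gt0 Rabs_phi_le phi_absorbed phi_close
          phi_first_step).
by rewrite /Defs.close /= eqxx.
Qed.

End Epidemic.

Theorem corollary1 (T : finType) (e : rel T) (lam gam s : R) (v0 u v : T) :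
  simple_graph e -> graph_connected e -> edge_transitive e ->
  0 < lam -> 0 < gam -> 0 < s -> e u v ->
  exists EA EB : R,
    infinite_sum (genN_term e u v (2 * lam / (2 * lam + s + gam))) EA /\
    infinite_sum (genN_term e u v (2 * lam / (2 * lam + s + 2 * gam))) EB /\
    infinite_sum (fun n => lt_n e lam gam s n (init_state v0))
      (2 * gam * ((1 - EA) / (s + gam) - (1 - EB) / (s + 2 * gam))
       / ((2 * lam + s) / (2 * lam) - 2 * EA + EB)).
Proof.
(* The argument never uses that the edge relation is symmetric or irreflexive. *)
move=> _ e_conn e_trans lam_gt0 gam_gt0 s_gt0 e_uv.
have z_in01 k : 0 <= k -> 0 <= 2 * lam / (2 * lam + s + k) <= 1.
  by move=> k_ge0; have := @div_in01 (2 * lam) (2 * lam + s + k) ltac:(lra); lra.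
exists (genN e (2 * lam / (2 * lam + s + gam)) u v).
exists (genN e (2 * lam / (2 * lam + s + 2 * gam)) u v).
split; [|split].
- by apply/is_lim_seq_Reals/genN_correct/z_in01; lra.
- by apply/is_lim_seq_Reals/genN_correct/z_in01; lra.
- exact: (LT_series e_conn e_trans e_uv lam_gt0 gam_gt0 s_gt0 v0).
Qed.
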